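(* Let $(L,\sqsubseteq)$ be a countably complete lattice, $F:L\to L$ monotone and $\omega$-cocontinuous, and $a\in L^\omega$ with $a_{n+1}\sqsubseteq a_n$ for all $n$. Define $c_m=\inf_{n\ge m}\sup_{k\ge n}F^k(a_k)$. Then $c_m\sqsubseteq F(c_m)$ for all $m\in\omega$. In particular, for every $\ell\in L$, $\inf_{n\in\omega}\sup_{k\ge n}F^k(\ell)$ is a postfixed point of $F$.
   Context: A countably complete lattice is a lattice in which every countable subset (including $\emptyset$) has a supremum and an infimum. $F$ is $\omega$-cocontinuous if $F(\inf_n c_n)=\inf_n F(c_n)$ for every descending chain $(c_n)$. $F^k$ is the $k$-fold iterate; a postfixed point is an $x$ with $x\sqsubseteq F(x)$. *)

From HB Require Import structures.
From mathcomp Require Import all_boot all_order.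
From mathcomp Require Import boolp classical_sets cardinality.
Set Implicit Arguments. Unset Strict Implicit. Unset Printing Implicit Defensive.
Import Order.Theory.
Local Open Scope classical_set_scope.

Section Defs.
Context {d : Order.disp_t} {L : porderType d}.

Definition is_ub (A : set L) (x : L) := forall y, A y -> (y <= x)%O.
Definition is_lb (A : set L) (x : L) := forall y, A y -> (x <= y)%O.
Definition is_lub (A : set L) (x : L) := is_ub A x /\ forall z, is_ub A z -> (x <= z)%O.
Definition is_glb (A : set L) (x : L) := is_lb A x /\ forall z, is_lb A z -> (z <= x)%O.

Definition countably_complete :=
  forall A : set L, countable A -> (exists x, is_lub A x) /\ (exists x, is_glb A x).

Definition omega_cocontinuous (F : L -> L) :=
  forall c : nat -> L, (forall n, (c n.+1 <= c n)%O) ->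
  forall x, is_glb (range c) x -> is_glb (range (F \o c)) (F x).
End Defs.

(* Write s_n for the supremum of the tail (F^k a_k)_{k >= n}. Each element of the
   tail at n+1 is F applied to an element dominated by the tail at n (a is
   descending and F^k monotone), so s_{n+1} <= F s_n. The s_n form a descending
   chain, so by cocontinuity F (inf_n s_n) = inf_n F s_n >= inf_n s_{n+1} = inf_n s_n;
   the same applies to every tail of the chain. A constant a gives the second claim. *)
From HB Require Import structures.
From mathcomp Require Import all_boot all_order.
From mathcomp Require Import boolp classical_sets cardinality.
Local Open Scope classical_set_scope.
Import Order.Theory.

Section PostfixedLimit.
Context {d : Order.disp_t} {L : latticeType d} {F : L -> L}.
Hypothesis F_homo : {homo F : x y / (x <= y)%O}.

Lemma iter_homo j : {homo iter j F : x y / (x <= y)%O}.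
Proof. by elim: j => [//|j IHj] x y lexy /=; apply/F_homo/IHj. Qed.

Lemma glb_chain_postfixed (t : nat -> L) (c : L) :
  omega_cocontinuous F ->
  (forall n, (t n.+1 <= t n)%O) -> (forall n, (t n.+1 <= F (t n))%O) ->
  is_glb (range t) c -> (c <= F c)%O.
Proof.
move=> F_cocont t_desc t_step glb_c.
have [_ ge_FC] := F_cocont t t_desc c glb_c.
apply: ge_FC => _ [n _ <-] /=.
by apply: le_trans (t_step n); apply: (proj1 glb_c); exists n.+1.
Qed.

Context {a s : nat -> L}.
Hypothesis a_desc : forall n, (a n.+1 <= a n)%O.
Hypothesis lub_s :
  forall n, is_lub [set iter k F (a k) | k in [set k | (n <= k)%N]] (s n).

Lemma lub_tail_antitone n n' : (n <= n')%N -> (s n' <= s n)%O.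
Proof.
move=> le_nn'; apply: (proj2 (lub_s n')) => _ [k /= le_n'k <-].
by apply: (proj1 (lub_s n)); exists k => //=; apply: leq_trans le_n'k.
Qed.

Lemma lub_tail_succ_le n : (s n.+1 <= F (s n))%O.
Proof.
apply: (proj2 (lub_s n.+1)) => _ [[//|k] /= le_nk <-].
apply/F_homo/(@le_trans _ _ (iter k F (a k))); first exact: iter_homo.
by apply: (proj1 (lub_s n)); exists k.
Qed.

Lemma glb_lub_tail_postfixed m c :
  omega_cocontinuous F ->
  is_glb (range (fun n => s (m + n)%N)) c -> (c <= F c)%O.
Proof.
move=> F_cocont; apply: glb_chain_postfixed => // n.
  by apply: lub_tail_antitone; rewrite addnS.
by rewrite addnS; apply: lub_tail_succ_le.
Qed.

End PostfixedLimit.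

Lemma range_shift (T : Type) (u : nat -> T) m :
  range (fun n => u (m + n)%N) = [set u n | n in [set n | (m <= n)%N]].
Proof.
apply/seteqP; split=> _ [n le_mn <-].
  by exists (m + n)%N => //=; rewrite leq_addr.
by exists (n - m)%N => //; rewrite subnKC.
Qed.

Theorem mainTheorem7 (d : Order.disp_t) (L : latticeType d) (F : L -> L)
    (a : nat -> L) :
  countably_complete (L := L) ->
  {homo F : x y / (x <= y)%O} ->
  omega_cocontinuous F ->
  (forall n, (a n.+1 <= a n)%O) ->
  (forall (s c : nat -> L),
      (forall n, is_lub [set iter k F (a k) | k in [set k | (n <= k)%N]] (s n)) ->
      (forall m, is_glb [set s n | n in [set n | (m <= n)%N]] (c m)) ->
      forall m, (c m <= F (c m))%O) /\
  (forall (l : L) (s : nat -> L) (c : L),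
      (forall n, is_lub [set iter k F l | k in [set k | (n <= k)%N]] (s n)) ->
      is_glb (range s) c ->
      (c <= F c)%O).
Proof.
move=> _ F_homo F_cocont a_desc; split.
  move=> s c lub_s glb_c m.
  apply: (glb_lub_tail_postfixed F_homo a_desc lub_s m) => //.
  by rewrite range_shift.
move=> l s c lub_s glb_c.
exact: (glb_lub_tail_postfixed (a := fun=> l) F_homo _ lub_s 0).
Qed.
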